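(* Let $\mathcal{B}=\{B_1,\dots,B_M\}$ be Boolean variables and $\mathcal{X}=\{X_1,\dots,X_N\}$ real variables. For every SMT formula $\phi$ over $\mathcal{B}$ and $\mathcal{X}$ belonging to any of the theories SMT($\mathcal{LRA}$), SMT($\mathcal{NRA}$), or SMT($\mathcal{RA}$), the set of models $\mathcal{M}(\phi)\subseteq\mathbb{B}^M\times\mathbb{R}^N$ belongs to the product $\sigma$-algebra $\mathcal{P}(\mathbb{B}^M)\times\mathcal{B}(\mathbb{R}^N)$. That is, SMT($\mathcal{LRA}$), SMT($\mathcal{NRA}$) and SMT($\mathcal{RA}$) are measurable theories.
   Context: $\mathbb{B}=\{\bot,\top\}$. An atomic formula is either a Boolean variable from $\mathcal{B}$ or a real arithmetical proposition $\theta$, built from variables in $\mathcal{X}$, real numbers and the symbols $+,\cdot,$ ^ (exponentiation) and $\le$ with their standard meaning; any such $\theta$ can be written as $\hat\theta(X_1,\dots,X_N)\le 0$ for a function $\hat\theta\colon\mathbb{R}^N\to\mathbb{R}$. SMT formulas are built from atomic formulas with $\lnot,\land,\lor$. In SMT($\mathcal{LRA}$) each $\hat\theta$ is linear, in SMT($\mathcal{NRA}$) polynomial, and in SMT($\mathcal{RA}$) unrestricted (any function obtained from variables and constants by addition, multiplication and exponentiation). A total interpretation is a pair $(I_{\mathcal{B}},I_{\mathcal{X}})$ with $I_{\mathcal{B}}\colon\mathcal{B}\to\mathbb{B}$, $I_{\mathcal{X}}\colon\mathcal{X}\to\mathbb{R}$; a Boolean atom gets value $I_{\mathcal{B}}$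 of it, a real atom $\theta$ is true iff $\hat\theta(I_{\mathcal{X}}(X_1),\dots,I_{\mathcal{X}}(X_N))\le 0$, extended through connectives in the usual way. The set of models is $\mathcal{M}(\phi)=\{((I_{\mathcal{B}}(B_i))_{i=1}^M,(I_{\mathcal{X}}(X_j))_{j=1}^N): I(\phi)=\top\}\subseteq\mathbb{B}^M\times\mathbb{R}^N$. $\mathcal{P}(\mathbb{B}^M)$ is the power set, $\mathcal{B}(\mathbb{R}^N)$ the Borel $\sigma$-algebra, and $\mathcal{P}(\mathbb{B}^M)\times\mathcal{B}(\mathbb{R}^N)$ the product $\sigma$-algebra generated by sets $A\times B$ with $A\subseteq\mathbb{B}^M$, $B\in\mathcal{B}(\mathbb{R}^N)$. A formula is called measurable if its set of models lies in this $\sigma$-algebra, and a theory is measurable if all its formulas are. *)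

From mathcomp Require Import all_boot all_order all_algebra.
From mathcomp Require Import all_classical all_reals all_analysis.
Set Implicit Arguments. Unset Strict Implicit. Unset Printing Implicit Defensive.
Import Order.TTheory GRing.Theory Num.Theory.
Import numFieldNormedType.Exports.
Local Open Scope classical_set_scope.
Local Open Scope ring_scope.

Section SMT.
Variables (R : realType) (M N : nat).

Inductive rterm : Type :=
| TVar of 'I_N
| TConst of R
| TAdd of rterm & rterm
| TMul of rterm & rterm
| TPow of rterm & rterm.

(* A real assignment is a row vector x in R^N; X_j is x 0 j. *)
Fixpoint teval (x : 'rV[R]_N) (t : rterm) : R :=
  match t with
  | TVar j => x ord0 j
  | TConst c => c
  | TAdd t1 t2 => teval x t1 + teval x t2
  | TMul t1 t2 => teval x t1 * teval x t2
  | TPow t1 t2 => powR (teval x t1) (teval x t2)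
  end.

Inductive formula : Type :=
| FBool of 'I_M
| FLe of rterm & rterm
| FNot of formula
| FAnd of formula & formula
| FOr of formula & formula.

Fixpoint feval (b : 'I_M -> bool) (x : 'rV[R]_N) (phi : formula) : bool :=
  match phi with
  | FBool i => b i
  | FLe t1 t2 => teval x t1 <= teval x t2
  | FNot p => ~~ feval b x p
  | FAnd p q => feval b x p && feval b x q
  | FOr p q => feval b x p || feval b x q
  end.

(* theta-hat of an atom t1 <= t2, i.e. the function with (t1 <= t2) <-> hat <= 0 *)
Definition atom_hat (t1 t2 : rterm) : 'rV[R]_N -> R :=
  fun x => teval x t1 - teval x t2.

Fixpoint atoms_satisfy (P : ('rV[R]_N -> R) -> Prop) (phi : formula) : Prop :=
  match phi with
  | FBool _ => True
  | FLe t1 t2 => P (atom_hat t1 t2)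
  | FNot p => atoms_satisfy P p
  | FAnd p q | FOr p q => atoms_satisfy P p /\ atoms_satisfy P q
  end.

Definition linear_fun (f : 'rV[R]_N -> R) : Prop :=
  exists (a : 'I_N -> R) (c : R), forall x, f x = \sum_(j < N) a j * x ord0 j + c.

Inductive poly_fun : ('rV[R]_N -> R) -> Prop :=
| PF_const (c : R) : poly_fun (fun _ => c)
| PF_var (j : 'I_N) : poly_fun (fun x => x ord0 j)
| PF_add f g : poly_fun f -> poly_fun g -> poly_fun (fun x => f x + g x)
| PF_mul f g : poly_fun f -> poly_fun g -> poly_fun (fun x => f x * g x)
| PF_ext f g : poly_fun f -> (forall x, f x = g x) -> poly_fun g.

Definition SMT_LRA (phi : formula) : Prop := atoms_satisfy linear_fun phi.
Definition SMT_NRA (phi : formula) : Prop := atoms_satisfy poly_fun phi.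
Definition SMT_RA (phi : formula) : Prop := True.

Definition models (phi : formula) : set (('I_M -> bool) * 'rV[R]_N) :=
  [set p | feval p.1 p.2 phi].

Definition borelRN : set (set 'rV[R]_N) := <<s [set U : set 'rV[R]_N | open U] >>.

Definition prod_sigma : set (set (('I_M -> bool) * 'rV[R]_N)) :=
  <<s [set S | exists (A : set ('I_M -> bool)) (B : set 'rV[R]_N),
          borelRN B /\ S = A `*` B] >>.

Definition measurable_formula (phi : formula) : Prop := prod_sigma (models phi).

Definition measurable_theory (T : formula -> Prop) : Prop :=
  forall phi, T phi -> measurable_formula phi.

End SMT.

From mathcomp Require Import all_boot all_order all_algebra.
From mathcomp Require Import all_classical all_reals all_analysis.
From mathcomp Require Import measurable_realfun.
Import numFieldNormedType.Exports.
Import Order.TTheory GRing.Theory Num.Theory.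
Local Open Scope classical_set_scope.
Local Open Scope ring_scope.

(* Every term denotes a Borel function of the real assignment: coordinates are
   continuous, and sums, products and [powR] of Borel functions are Borel
   ([powR] is [expR (y * ln x)] away from the measurable set [x = 0]).  Hence
   each real atom defines a Borel set, each Boolean atom a rectangle, and the
   connectives stay inside the product sigma-algebra since it is closed under
   complement and finite intersections and unions. *)

Lemma measurable_funpowR d (T : measurableType d) (R : realType) (f g : T -> R) :
  measurable_fun [set: T] f -> measurable_fun [set: T] g ->
  measurable_fun [set: T] (fun x => f x `^ g x).
Proof.
move=> mf mg; rewrite /powR.
apply: measurable_fun_ifT.
- exact: measurable_fun_eqr mf (measurable_cst _).
- have -> : (fun x => ((g x == 0)%:R : R)) = (fun x => if g x == 0 then 1 else 0).
    by apply: funext => x; case: (_ == _).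
  apply: measurable_fun_ifT; last exact: measurable_cst.
  + exact: measurable_fun_eqr mg (measurable_cst _).
  + exact: measurable_cst.
- apply: measurableT_comp; first exact: measurable_expR.
  exact/measurable_funM/(measurableT_comp (@measurable_ln R)).
Qed.

Lemma continuous_open_sigma_measurable (T : ptopologicalType) (R : realType)
    (f : T -> R) :
  continuous f -> measurable_fun [set: g_sigma_algebraType (fun U : set T => open U)] f.
Proof.
move=> cf; apply: (measurability _ (RGenOInfty.measurableE R)) => //.
move=> /= _ [_ [a ->] <-]; rewrite setTI.
apply: sub_sigma_algebra => /=.
by apply: open_comp; [move=> x _; exact: cf | exact: interval_open].
Qed.

Section smt_models.
Variables (R : realType) (M N : nat).

Local Notation RN := (g_sigma_algebraType (fun U : set 'rV[R]_N => open U)).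

Let rectangles := [set S : set (('I_M -> bool) * 'rV[R]_N) |
  exists (A : set ('I_M -> bool)) (B : set 'rV[R]_N), borelRN B /\ S = A `*` B].

Local Notation RNxB := (g_sigma_algebraType rectangles).

Lemma measurable_teval (t : rterm R N) : measurable_fun [set: RN] (fun x => teval x t).
Proof.
elim: t => [j|c|t1 h1 t2 h2|t1 h1 t2 h2|t1 h1 t2 h2] /=.
- by apply: continuous_open_sigma_measurable => x; exact: coord_continuous.
- exact: measurable_cst.
- exact: measurable_funD.
- exact: measurable_funM.
- exact: measurable_funpowR.
Qed.

Lemma borelRN_teval_le (t1 t2 : rterm R N) :
  borelRN [set x | teval x t1 <= teval x t2].
Proof.
have := @measurable_fun_ler _ RN R setT _ _ (measurable_teval t1)
  (measurable_teval t2) measurableT [set true] I.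
by rewrite setTI; congr borelRN; apply/seteqP; split => x.
Qed.

Lemma prod_sigma_models (phi : formula R M N) : prod_sigma (models phi).
Proof.
change (measurable (models phi : set RNxB)).
elim: phi => [i|t1 t2|p mp|p mp q mq|p mp q mq].
- apply: sub_sigma_algebra; exists [set b | b i], setT; split.
    exact: (@measurableT _ RN).
  by apply/seteqP; split => -[b x]; rewrite /models /=; tauto.
- apply: sub_sigma_algebra; exists setT, [set x | teval x t1 <= teval x t2].
  split; first exact: borelRN_teval_le.
  by apply/seteqP; split => -[b x]; rewrite /models /=; tauto.
- have -> : models (FNot p) = ~` models p.
    by apply/seteqP; split => x /negP.
  exact: measurableC.
- have -> : models (FAnd p q) = models p `&` models q.
    by apply/seteqP; split => x /andP.
  exact: measurableI.
- have -> : models (FOr p q) = models p `|` models q.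
    by apply/seteqP; split => x /orP.
  exact: measurableU.
Qed.

End smt_models.

Theorem lemma14 (R : realType) (M N : nat) :
  measurable_theory (@SMT_LRA R M N) /\
  measurable_theory (@SMT_NRA R M N) /\
  measurable_theory (@SMT_RA R M N).
Proof.
by split; [|split] => phi _; exact: prod_sigma_models.
Qed.
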